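(* (Soundness.) Every rule of the calculus D.BL is sound with respect to perfect heterogeneous bilattices, and every rule of D.CBL is sound with respect to perfect heterogeneous bilattices with conflation: for every perfect HBL (resp. perfect HCBL) $(\mathbb{L}_1,\mathbb{L}_2,\mathrm{n},\mathrm{p})$ and every assignment of the type-$i$ atoms to elements of $\mathbb{L}_i$ ($i=1,2$), if the interpretations of all premises of the rule hold, then the interpretation of its conclusion holds; in particular, every sequent derivable in D.BL (resp. D.CBL) holds under every assignment in every perfect HBL (resp. perfect HCBL).
   Context: A heterogeneous bilattice (HBL) is a tuple $(\mathbb{L}_1,\mathbb{L}_2,\mathrm{n},\mathrm{p})$ where $\mathbb{L}_1=(L_1,\sqcap_1,\sqcup_1,0_1,1_1)$ and $\mathbb{L}_2=(L_2,\sqcap_2,\sqcup_2,0_2,1_2)$ are bounded distributive lattices and $\mathrm{n}:\mathbb{L}_1\to\mathbb{L}_2$, $\mathrm{p}:\mathbb{L}_2\to\mathbb{L}_1$ are mutually inverse lattice isomorphisms. A heterogeneous bilattice with conflation (HCBL) is defined in the same way except that $\mathbb{L}_1,\mathbb{L}_2$ are De Morgan algebras (with De Morgan negations ${\sim}_1,{\sim}_2$) and $\mathrm{n},\mathrm{p}$ are mutually inverse De Morgan algebra isomorphisms (so also $\mathrm{n}({\sim}_1a)={\sim}_2\mathrm{n}(a)$, $\mathrm{p}({\sim}_2b)={\sim}_1\mathrm{p}(b)$). An HBL/HCBL is perfect if $\mathbb{L}_1,\mathbb{L}_2$ are perfect distributive lattices (complete, completely distributive, completely join-generated by completely join-irreducible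 elements and completely meet-generated by completely meet-irreducible elements) and $\mathrm{n},\mathrm{p}$ preserve arbitrary joins and meets. Calculus D.BL. There are two types, $1$ and $2$; for each $i$ fix a countable set of type-$i$ atoms $p_i,q_i,\dots$. Type-1 formulas: $A_1::=p_1\mid 1_1\mid 0_1\mid \mathrm{p}A_2\mid A_1\sqcap_1A_1\mid A_1\sqcup_1A_1$; type-2 formulas: $A_2::=p_2\mid 1_2\mid 0_2\mid \mathrm{n}A_1\mid A_2\sqcap_2A_2\mid A_2\sqcup_2A_2$. Type-1 structures: $X_1::=A_1\mid \hat1_1\mid\check0_1\mid \mathrm{P}X_2\mid X_1\hat\sqcap_1X_1\mid X_1\check\sqcup_1X_1\mid X_1\check\sqsupset_1X_1\mid X_1\hat\sqsubset_1X_1$; type-2 structures: $X_2::=A_2\mid \hat1_2\mid\check0_2\mid \mathrm{N}X_1\mid X_2\hat\sqcap_2X_2\mid X_2\check\sqcup_2X_2\mid X_2\check\sqsupset_2X_2\mid X_2\hat\sqsubset_2X_2$. A sequent is $X_i\vdash Y_i$ with both sides of the same type. Rules (for $i\in\{1,2\}$; $X,Y,Z,W$ type-$i$ structures and $A,B$ type-$i$ formulas unless indexed otherwise; ''$\Leftrightarrow$'' means the rule applies in both directions): Display: $X\hat\sqcap_iY\vdash Z\Leftrightarrow X\vdash Y\check\sqsupset_iZ$; $X\vdash Y\check\sqcup_iZ\Leftrightarrow X\hat\sqsubset_iY\vdash Z$; $\mathrm{P}X_2\vdash Y_1\Leftrightarrow X_2\vdash \mathrm{N}Y_1$; $\mathrm{N}X_1\vdash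 Y_2\Leftrightarrow X_1\vdash\mathrm{P}Y_2$. Identity $p_i\vdash p_i$ for atoms; Cut: from $X\vdash A$ and $A\vdash Y$ infer $X\vdash Y$. Structural: from $X\hat\sqcap_i\hat1_i\vdash Y$ infer $X\vdash Y$; from $X\vdash Y\check\sqcup_i\check0_i$ infer $X\vdash Y$; from $X\hat\sqcap_iY\vdash Z$ infer $Y\hat\sqcap_iX\vdash Z$; from $X\vdash Y\check\sqcup_iZ$ infer $X\vdash Z\check\sqcup_iY$; from $(X\hat\sqcap_iY)\hat\sqcap_iZ\vdash W$ infer $X\hat\sqcap_i(Y\hat\sqcap_iZ)\vdash W$; from $X\vdash(Y\check\sqcup_iZ)\check\sqcup_iW$ infer $X\vdash Y\check\sqcup_i(Z\check\sqcup_iW)$; from $X\vdash Z$ infer $X\hat\sqcap_iY\vdash Z$; from $X\vdash Y$ infer $X\vdash Y\check\sqcup_iZ$; from $X\hat\sqcap_iX\vdash Z$ infer $X\vdash Z$; from $X\vdash Y\check\sqcup_iY$ infer $X\vdash Y$. Operational: from $\hat1_i\vdash X$ infer $1_i\vdash X$; axiom $\hat1_i\vdash 1_i$; axiom $0_i\vdash\check0_i$; from $X\vdash\check0_i$ infer $X\vdash 0_i$; from $A\hat\sqcap_iB\vdash X$ infer $A\sqcap_iB\vdash X$; from $X\vdash A$ and $Y\vdash B$ infer $X\hat\sqcap_iY\vdash A\sqcap_iB$; from $A\vdash X$ and $B\vdash Y$ infer $A\sqcup_iB\vdash X\check\sqcup_iY$; from $X\vdash A\check\sqcup_iB$ infer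 $X\vdash A\sqcup_iB$. Multi-type structural: $X_1\vdash Y_1\Leftrightarrow \mathrm{N}X_1\vdash\mathrm{N}Y_1$; $X_2\vdash Y_2\Leftrightarrow\mathrm{P}X_2\vdash\mathrm{P}Y_2$; from $\check0_1\vdash X_1$ infer $\mathrm{P}\check0_2\vdash X_1$; from $X_1\vdash\hat1_1$ infer $X_1\vdash\mathrm{P}\hat1_2$. Multi-type operational: from $\mathrm{N}A_1\vdash X_2$ infer $\mathrm{n}A_1\vdash X_2$; from $X_2\vdash\mathrm{N}A_1$ infer $X_2\vdash\mathrm{n}A_1$; from $\mathrm{P}A_2\vdash X_1$ infer $\mathrm{p}A_2\vdash X_1$; from $X_1\vdash\mathrm{P}A_2$ infer $X_1\vdash\mathrm{p}A_2$. Calculus D.CBL: add formulas ${\sim}_iA_i$ and structures $\ast_iX_i$ of type $i$, and the rules $\ast_iX\vdash Y\Leftrightarrow\ast_iY\vdash X$; $X\vdash\ast_iY\Leftrightarrow Y\vdash\ast_iX$; $X\vdash Y\Leftrightarrow\ast_iY\vdash\ast_iX$; from $\mathrm{N}\ast_1X_1\vdash Y_2$ infer $\ast_2\mathrm{N}X_1\vdash Y_2$; from $X_2\vdash\mathrm{N}\ast_1Y_1$ infer $X_2\vdash\ast_2\mathrm{N}Y_1$; from $\ast_iA\vdash Y$ infer ${\sim}_iA\vdash Y$; from $X\vdash\ast_iA$ infer $X\vdash{\sim}_iA$. Derivations are finite trees of rule applications with axioms at the leaves. Interpretation: given an assignment of atoms, formulas are interpreted with $\sqcap_i,\sqcup_i,0_i,1_i,\mathrm{n},\mathrm{p},{\sim}_i$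 as the algebra operations; structures are interpreted by reading $\hat1_i,\check0_i,\hat\sqcap_i,\check\sqcup_i,\mathrm{N},\mathrm{P},\ast_i$ as $1_i,0_i,\sqcap_i,\sqcup_i,\mathrm{n},\mathrm{p},{\sim}_i$, $Y\check\sqsupset_iZ$ as the right residual of $\sqcap_i$ (the largest $x$ with $x\sqcap_i y\le z$) and $X\hat\sqsubset_iY$ as the left residual of $\sqcup_i$ (the least $z$ with $x\le y\sqcup_i z$), which exist in perfect lattices. A sequent $X\vdash Y$ holds if the interpretation of $X$ is $\le_i$ that of $Y$. *)

From HB Require Import structures.
From mathcomp Require Import all_boot all_order.
From Stdlib Require Import ClassicalEpsilon.
From Stdlib Require List.
Set Implicit Arguments. Unset Strict Implicit. Unset Printing Implicit Defensive.
Import Order.TTheory.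
Local Open Scope order_scope.

Section LatticeNotions.
Context {d : Order.disp_t} (L : tbDistrLatticeType d).

Definition is_ub (S : L -> Prop) (x : L) := forall y, S y -> y <= x.
Definition is_lb (S : L -> Prop) (x : L) := forall y, S y -> x <= y.
Definition is_lub (S : L -> Prop) (x : L) :=
  is_ub S x /\ forall z, is_ub S z -> x <= z.
Definition is_glb (S : L -> Prop) (x : L) :=
  is_lb S x /\ forall z, is_lb S z -> z <= x.

Definition complete_lattice : Prop :=
  (forall S : L -> Prop, exists x, is_lub S x) /\
  (forall S : L -> Prop, exists x, is_glb S x).

(* complete distributivity: /\_i \/_j x_ij = \/_{f} /\_i x_{i,f(i)} *)
Definition completely_distributive : Prop :=
  forall (I : Type) (J : I -> Type) (x : forall i, J i -> L)
         (s : I -> L) (a : L) (m : (forall i, J i) -> L) (b : L),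
    (forall i, is_lub (fun y => exists j, y = x i j) (s i)) ->
    is_glb (fun y => exists i, y = s i) a ->
    (forall f, is_glb (fun y => exists i, y = x i (f i)) (m f)) ->
    is_lub (fun y => exists f, y = m f) b ->
    a = b.

Definition completely_join_irreducible (j : L) : Prop :=
  forall S : L -> Prop, is_lub S j -> S j.
Definition completely_meet_irreducible (j : L) : Prop :=
  forall S : L -> Prop, is_glb S j -> S j.

Definition completely_join_generated : Prop :=
  forall x : L, exists S : L -> Prop,
    (forall j, S j -> completely_join_irreducible j) /\ is_lub S x.
Definition completely_meet_generated : Prop :=
  forall x : L, exists S : L -> Prop,
    (forall m, S m -> completely_meet_irreducible m) /\ is_glb S x.

Definition perfect : Prop :=
  [/\ complete_lattice, completely_distributive,
      completely_join_generated & completely_meet_generated].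

Definition de_morgan_neg (neg : L -> L) : Prop :=
  (forall a, neg (neg a) = a) /\
  (forall a b, neg (a `&` b) = neg a `|` neg b).

Definition rres (y z : L) : L :=
  epsilon (inhabits \bot)
    (fun x => x `&` y <= z /\ forall w, w `&` y <= z -> w <= x).
Definition lres (x y : L) : L :=
  epsilon (inhabits \bot)
    (fun z => x <= y `|` z /\ forall w, x <= y `|` w -> z <= w).
End LatticeNotions.

Section Maps.
Context {d1 d2 : Order.disp_t} (L1 : tbDistrLatticeType d1) (L2 : tbDistrLatticeType d2).

Definition lattice_morphism (f : L1 -> L2) : Prop :=
  [/\ forall x y, f (x `&` y) = f x `&` f y,
      forall x y, f (x `|` y) = f x `|` f y,
      f \bot = \bot & f \top = \top].

Definition preserves_joins (f : L1 -> L2) : Prop :=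
  forall (S : L1 -> Prop) (x : L1), is_lub S x ->
    is_lub (fun y => exists z, S z /\ y = f z) (f x).
Definition preserves_meets (f : L1 -> L2) : Prop :=
  forall (S : L1 -> Prop) (x : L1), is_glb S x ->
    is_glb (fun y => exists z, S z /\ y = f z) (f x).
End Maps.

Section Bilattices.
Context {d1 d2 : Order.disp_t} (L1 : tbDistrLatticeType d1) (L2 : tbDistrLatticeType d2).

Definition HBL (n : L1 -> L2) (p : L2 -> L1) : Prop :=
  [/\ lattice_morphism n, lattice_morphism p, cancel n p & cancel p n].

Definition HCBL (n : L1 -> L2) (p : L2 -> L1) (neg1 : L1 -> L1) (neg2 : L2 -> L2) : Prop :=
  [/\ HBL n p, de_morgan_neg neg1, de_morgan_neg neg2,
      forall a, n (neg1 a) = neg2 (n a) & forall b, p (neg2 b) = neg1 (p b)].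

Definition perfect_maps (n : L1 -> L2) (p : L2 -> L1) : Prop :=
  [/\ preserves_joins n, preserves_meets n, preserves_joins p & preserves_meets p].

Definition perfect_HBL (n : L1 -> L2) (p : L2 -> L1) : Prop :=
  [/\ HBL n p, perfect L1, perfect L2 & perfect_maps n p].

Definition perfect_HCBL (n : L1 -> L2) (p : L2 -> L1) (neg1 : L1 -> L1) (neg2 : L2 -> L2) : Prop :=
  [/\ HCBL n p neg1 neg2, perfect L1, perfect L2 & perfect_maps n p].
End Bilattices.

(* Syntax of D.BL / D.CBL.  The boolean [c] says whether the conflation *)
(* connectives (~ and * ) are available: c = false is D.BL,            *)
(* c = true is D.CBL.                                                  *)
Inductive ty := T1 | T2.

Inductive fm (c : bool) : ty -> Type :=
| fAt (i : ty) (k : nat) : fm c i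
| fOne (i : ty) : fm c i
| fZero (i : ty) : fm c i
| fP : fm c T2 -> fm c T1
| fN : fm c T1 -> fm c T2
| fMeet (i : ty) : fm c i -> fm c i -> fm c i
| fJoin (i : ty) : fm c i -> fm c i -> fm c i
| fNeg (i : ty) : c = true -> fm c i -> fm c i.

Inductive st (c : bool) : ty -> Type :=
| sF (i : ty) : fm c i -> st c i
| sOne (i : ty) : st c i
| sZero (i : ty) : st c i
| sP : st c T2 -> st c T1
| sN : st c T1 -> st c T2
| sMeet (i : ty) : st c i -> st c i -> st c i
| sJoin (i : ty) : st c i -> st c i -> st c i
| sRres (i : ty) : st c i -> st c i -> st c i
| sLres (i : ty) : st c i -> st c i -> st c i
| sStar (i : ty) : c = true -> st c i -> st c i.

Inductive sequent (c : bool) : Type := Sq (i : ty) (X Y : st c i).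

Inductive rule (c : bool) : seq (sequent c) -> sequent c -> Prop :=
| r_disp_meet_res i (X Y Z : st c i) :
    rule [:: Sq (sMeet X Y) Z] (Sq X (sRres Y Z))
| r_disp_res_meet i (X Y Z : st c i) :
    rule [:: Sq X (sRres Y Z)] (Sq (sMeet X Y) Z)
| r_disp_join_lres i (X Y Z : st c i) :
    rule [:: Sq X (sJoin Y Z)] (Sq (sLres X Y) Z)
| r_disp_lres_join i (X Y Z : st c i) :
    rule [:: Sq (sLres X Y) Z] (Sq X (sJoin Y Z))
| r_disp_PN (X : st c T2) (Y : st c T1) :
    rule [:: Sq (sP X) Y] (Sq X (sN Y))
| r_disp_PN' (X : st c T2) (Y : st c T1) :
    rule [:: Sq X (sN Y)] (Sq (sP X) Y)
| r_disp_NP (X : st c T1) (Y : st c T2) :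
    rule [:: Sq (sN X) Y] (Sq X (sP Y))
| r_disp_NP' (X : st c T1) (Y : st c T2) :
    rule [:: Sq X (sP Y)] (Sq (sN X) Y)
| r_id i (k : nat) :
    rule [::] (Sq (sF (@fAt c i k)) (sF (@fAt c i k)))
| r_cut i (X Y : st c i) (A : fm c i) :
    rule [:: Sq X (sF A); Sq (sF A) Y] (Sq X Y)
| r_oneE i (X Y : st c i) :
    rule [:: Sq (sMeet X (sOne c i)) Y] (Sq X Y)
| r_zeroE i (X Y : st c i) :
    rule [:: Sq X (sJoin Y (sZero c i))] (Sq X Y)
| r_meetC i (X Y Z : st c i) :
    rule [:: Sq (sMeet X Y) Z] (Sq (sMeet Y X) Z)
| r_joinC i (X Y Z : st c i) :
    rule [:: Sq X (sJoin Y Z)] (Sq X (sJoin Z Y))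
| r_meetA i (X Y Z W : st c i) :
    rule [:: Sq (sMeet (sMeet X Y) Z) W] (Sq (sMeet X (sMeet Y Z)) W)
| r_joinA i (X Y Z W : st c i) :
    rule [:: Sq X (sJoin (sJoin Y Z) W)] (Sq X (sJoin Y (sJoin Z W)))
| r_weakL i (X Y Z : st c i) :
    rule [:: Sq X Z] (Sq (sMeet X Y) Z)
| r_weakR i (X Y Z : st c i) :
    rule [:: Sq X Y] (Sq X (sJoin Y Z))
| r_contrL i (X Z : st c i) :
    rule [:: Sq (sMeet X X) Z] (Sq X Z)
| r_contrR i (X Y : st c i) :
    rule [:: Sq X (sJoin Y Y)] (Sq X Y)
| r_oneL i (X : st c i) :
    rule [:: Sq (sOne c i) X] (Sq (sF (fOne c i)) X)
| r_oneR i :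
    rule [::] (Sq (sOne c i) (sF (fOne c i)))
| r_zeroL i :
    rule [::] (Sq (sF (fZero c i)) (sZero c i))
| r_zeroR i (X : st c i) :
    rule [:: Sq X (sZero c i)] (Sq X (sF (fZero c i)))
| r_meetL i (A B : fm c i) (X : st c i) :
    rule [:: Sq (sMeet (sF A) (sF B)) X] (Sq (sF (fMeet A B)) X)
| r_meetR i (X Y : st c i) (A B : fm c i) :
    rule [:: Sq X (sF A); Sq Y (sF B)] (Sq (sMeet X Y) (sF (fMeet A B)))
| r_joinL i (A B : fm c i) (X Y : st c i) :
    rule [:: Sq (sF A) X; Sq (sF B) Y] (Sq (sF (fJoin A B)) (sJoin X Y))
| r_joinR i (X : st c i) (A B : fm c i) :
    rule [:: Sq X (sJoin (sF A) (sF B))] (Sq X (sF (fJoin A B)))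
| r_N_mono (X Y : st c T1) : rule [:: Sq X Y] (Sq (sN X) (sN Y))
| r_N_refl (X Y : st c T1) : rule [:: Sq (sN X) (sN Y)] (Sq X Y)
| r_P_mono (X Y : st c T2) : rule [:: Sq X Y] (Sq (sP X) (sP Y))
| r_P_refl (X Y : st c T2) : rule [:: Sq (sP X) (sP Y)] (Sq X Y)
| r_P_zero (X : st c T1) :
    rule [:: Sq (sZero c T1) X] (Sq (sP (sZero c T2)) X)
| r_P_one (X : st c T1) :
    rule [:: Sq X (sOne c T1)] (Sq X (sP (sOne c T2)))
| r_nL (A : fm c T1) (X : st c T2) :
    rule [:: Sq (sN (sF A)) X] (Sq (sF (fN A)) X)
| r_nR (A : fm c T1) (X : st c T2) :
    rule [:: Sq X (sN (sF A))] (Sq X (sF (fN A)))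
| r_pL (A : fm c T2) (X : st c T1) :
    rule [:: Sq (sP (sF A)) X] (Sq (sF (fP A)) X)
| r_pR (A : fm c T2) (X : st c T1) :
    rule [:: Sq X (sP (sF A))] (Sq X (sF (fP A)))
| r_starL (H : c = true) i (X Y : st c i) :
    rule [:: Sq (sStar H X) Y] (Sq (sStar H Y) X)
| r_starR (H : c = true) i (X Y : st c i) :
    rule [:: Sq X (sStar H Y)] (Sq Y (sStar H X))
| r_star_contra (H : c = true) i (X Y : st c i) :
    rule [:: Sq X Y] (Sq (sStar H Y) (sStar H X))
| r_star_contra' (H : c = true) i (X Y : st c i) :
    rule [:: Sq (sStar H Y) (sStar H X)] (Sq X Y)
| r_starNL (H : c = true) (X : st c T1) (Y : st c T2) :
    rule [:: Sq (sN (sStar H X)) Y] (Sq (sStar H (sN X)) Y)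
| r_starNR (H : c = true) (X : st c T2) (Y : st c T1) :
    rule [:: Sq X (sN (sStar H Y))] (Sq X (sStar H (sN Y)))
| r_negL (H : c = true) i (A : fm c i) (Y : st c i) :
    rule [:: Sq (sStar H (sF A)) Y] (Sq (sF (fNeg H A)) Y)
| r_negR (H : c = true) i (X : st c i) (A : fm c i) :
    rule [:: Sq X (sStar H (sF A))] (Sq X (sF (fNeg H A))).

Inductive derivable (c : bool) : sequent c -> Prop :=
| der (ps : seq (sequent c)) (s : sequent c) :
    rule ps s -> (forall q, List.In q ps -> derivable q) -> derivable s.

Section Interp.
Context {d1 d2 : Order.disp_t} {L1 : tbDistrLatticeType d1} {L2 : tbDistrLatticeType d2}.
Variables (n : L1 -> L2) (p : L2 -> L1) (neg1 : L1 -> L1) (neg2 : L2 -> L2)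
          (v1 : nat -> L1) (v2 : nat -> L2).

Definition car (i : ty) : Type := match i with T1 => L1 | T2 => L2 end.

Definition cle (i : ty) : car i -> car i -> Prop :=
  match i return car i -> car i -> Prop with
  | T1 => fun x y : L1 => x <= y | T2 => fun x y : L2 => x <= y end.
Definition cmeet (i : ty) : car i -> car i -> car i :=
  match i return car i -> car i -> car i with
  | T1 => fun x y : L1 => x `&` y | T2 => fun x y : L2 => x `&` y end.
Definition cjoin (i : ty) : car i -> car i -> car i :=
  match i return car i -> car i -> car i with
  | T1 => fun x y : L1 => x `|` y | T2 => fun x y : L2 => x `|` y end.
Definition crres (i : ty) : car i -> car i -> car i :=
  match i return car i -> car i -> car i with
  | T1 => fun x y : L1 => rres x y | T2 => fun x y : L2 => rres x y end.
Definition clres (i : ty) : car i -> car i -> car i :=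
  match i return car i -> car i -> car i with
  | T1 => fun x y : L1 => lres x y | T2 => fun x y : L2 => lres x y end.
Definition ctop (i : ty) : car i :=
  match i return car i with T1 => (\top : L1) | T2 => (\top : L2) end.
Definition cbot (i : ty) : car i :=
  match i return car i with T1 => (\bot : L1) | T2 => (\bot : L2) end.
Definition cneg (i : ty) : car i -> car i :=
  match i return car i -> car i with T1 => neg1 | T2 => neg2 end.
Definition cval (i : ty) : nat -> car i :=
  match i return nat -> car i with T1 => v1 | T2 => v2 end.

Fixpoint ifm {c : bool} {i : ty} (A : fm c i) {struct A} : car i :=
  match A in fm _ j return car j with
  | fAt j k => @cval j k
  | fOne j => @ctop j
  | fZero j => @cbot j
  | fP B => p (ifm B)
  | fN B => n (ifm B)
  | fMeet j B C => @cmeet j (ifm B) (ifm C)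
  | fJoin j B C => @cjoin j (ifm B) (ifm C)
  | fNeg j _ B => @cneg j (ifm B)
  end.

Fixpoint ist {c : bool} {i : ty} (X : st c i) {struct X} : car i :=
  match X in st _ j return car j with
  | sF j A => ifm A
  | sOne j => @ctop j
  | sZero j => @cbot j
  | sP Y => p (ist Y)
  | sN Y => n (ist Y)
  | sMeet j Y Z => @cmeet j (ist Y) (ist Z)
  | sJoin j Y Z => @cjoin j (ist Y) (ist Z)
  | sRres j Y Z => @crres j (ist Y) (ist Z)
  | sLres j Y Z => @clres j (ist Y) (ist Z)
  | sStar j _ Y => @cneg j (ist Y)
  end.

Definition holds {c : bool} (s : sequent c) : Prop :=
  match s with Sq i X Y => @cle i (ist X) (ist Y) end.
End Interp.

(* For D.BL (c = false) no negation node can occur, so the negation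
   parameters of [holds] are irrelevant; we instantiate them with [id]. *)
Definition holds_BL {d1 d2 : Order.disp_t} {L1 : tbDistrLatticeType d1}
  {L2 : tbDistrLatticeType d2} (n : L1 -> L2) (p : L2 -> L1)
  (v1 : nat -> L1) (v2 : nat -> L2) (s : sequent false) : Prop :=
  holds n p id id v1 v2 s.

(* In a complete, completely distributive
   lattice, meet distributes over arbitrary joins and join over arbitrary
   meets, so the residuals chosen by [rres] and [lres] really are the adjoints
   of meet and join; this validates the display rules for them. The display
   and monotonicity rules for N and P hold because mutually inverse lattice
   isomorphisms are order isomorphisms, hence adjoint to each other, and the
   conflation rules hold because a De Morgan negation is an antitone
   involution commuting with n. *)

From HB Require Import structures.
From mathcomp Require Import all_boot all_order.
From Stdlib Require Import ClassicalEpsilon Classical.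
From Stdlib Require List.
Set Implicit Arguments. Unset Strict Implicit. Unset Printing Implicit Defensive.
Import Order.TTheory.
Local Open Scope order_scope.

Section BooleanBounds.
Context {d : Order.disp_t} (L : tbDistrLatticeType d).

Lemma is_glb_bool (F : bool -> L) :
  is_glb (fun t => exists i, t = F i) (F true `&` F false).
Proof.
split; first by move=> t [[] ->]; rewrite ?leIl ?leIr.
by move=> w lbw; rewrite lexI lbw ?lbw //; [exists false | exists true].
Qed.

Lemma is_lub_bool (F : bool -> L) :
  is_lub (fun t => exists i, t = F i) (F true `|` F false).
Proof.
split; first by move=> t [[] ->]; rewrite ?leUl ?leUr.
by move=> w ubw; rewrite leUx ubw ?ubw //; [exists false | exists true].
Qed.
End BooleanBounds.

Section Residuation.
Context {d : Order.disp_t} (L : tbDistrLatticeType d).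
Hypotheses (complL : complete_lattice L) (distrL : completely_distributive L).

(* Complete distributivity for the two rows S and {y}: every choice function
   picks some u in S and y, so the right-hand side is a join of u `&` y's. *)
Lemma lub_meet_le (S : L -> Prop) (s y z : L) :
  is_lub S s -> (forall u, S u -> u `&` y <= z) -> s `&` y <= z.
Proof.
move=> [ubs lubs] Sz.
pose J (i : bool) := if i then {u | S u} else unit.
pose row (i : bool) : J i -> L := if i as b return J b -> L then sval else fun=> y.
have [b lubb] := complL.1 (fun t => exists f, t = row true (f true) `&` row false (f false)).
have lub_row i : is_lub (fun t => exists j, t = row i j) (if i then s else y).
  case: i; last by split=> [t [j ->] // | w ubw]; apply: ubw; exists tt.
  split=> [t [[u Su] ->] | w ubw]; first exact: ubs.
  by apply: lubs => u Su; apply: ubw; exists (exist _ u Su).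
rewrite (distrL lub_row (is_glb_bool _) (fun f => is_glb_bool (fun i => row i (f i))) lubb).
by apply: lubb.2 => t [f ->]; apply: Sz; case: (f true).
Qed.

(* Dually, with one row {y, u} for each u in S: a choice function either
   picks y in some row, or picks every u, and then its meet lies below s. *)
Lemma join_glb_ge (S : L -> Prop) (s x y : L) :
  is_glb S s -> (forall u, S u -> x <= y `|` u) -> x <= y `|` s.
Proof.
move=> [lbs glbs] Sx.
pose I := {u | S u}.
pose row (i : I) (j : bool) := if j then y else sval i.
have glb_sig (T : L -> Prop) : {t | is_glb T t}.
  exact: constructive_indefinite_description (complL.2 T).
pose m (f : I -> bool) := sval (glb_sig (fun t => exists i, t = row i (f i))).
have glbm f : is_glb (fun t => exists i, t = row i (f i)) (m f) by exact: svalP.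
have [a glba] := complL.2 (fun t => exists i : I, t = y `|` sval i).
have [b lubb] := complL.1 (fun t => exists f, t = m f).
have xa : x <= a by apply: glba.2 => t [[u Su] ->]; exact: Sx.
rewrite (distrL (fun i => is_lub_bool (row i)) glba glbm lubb) in xa.
apply: le_trans xa _; apply: lubb.2 => t [f ->].
have [lbm _] := glbm f.
case: (classic (exists i, f i)) => [[i fi] | nf].
  by apply: lexUl; have := lbm _ (ex_intro _ i erefl); rewrite /row fi.
apply: lexUr; apply: glbs => u Su; have := lbm _ (ex_intro _ (exist _ u Su) erefl).
by rewrite /row; case: ifP => // fi; case: nf; exists (exist _ u Su).
Qed.

Lemma rres_spec (y z : L) :
  rres y z `&` y <= z /\ forall w, w `&` y <= z -> w <= rres y z.
Proof.
have [s lubs] := complL.1 (fun w => w `&` y <= z).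
have rres_ex : exists x, x `&` y <= z /\ forall w, w `&` y <= z -> w <= x.
  by exists s; split=> [|w]; [apply: lub_meet_le lubs _ | apply: lubs.1].
exact: epsilon_spec rres_ex.
Qed.

Lemma lres_spec (x y : L) :
  x <= y `|` lres x y /\ forall w, x <= y `|` w -> lres x y <= w.
Proof.
have [s glbs] := complL.2 (fun w => x <= y `|` w).
have lres_ex : exists z, x <= y `|` z /\ forall w, x <= y `|` w -> z <= w.
  by exists s; split=> [|w]; [apply: join_glb_ge glbs _ | apply: glbs.1].
exact: epsilon_spec lres_ex.
Qed.

Lemma le_rres (x y z : L) : (x <= rres y z) = (x `&` y <= z).
Proof.
have [rresy rres_max] := rres_spec y z.
by apply/idP/idP => [le_x | /rres_max //]; apply: le_trans rresy; rewrite leI2.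
Qed.

Lemma lres_le (x y z : L) : (lres x y <= z) = (x <= y `|` z).
Proof.
have [lresy lres_min] := lres_spec x y.
by apply/idP/idP => [le_z | /lres_min //]; apply: le_trans lresy _; rewrite leU2.
Qed.
End Residuation.

Section DeMorganNegation.
Context {d : Order.disp_t} (L : tbDistrLatticeType d) (neg : L -> L).
Hypothesis negL : de_morgan_neg neg.

Lemma le_dmn2 (x y : L) : (neg x <= neg y) = (y <= x).
Proof.
have anti (a b : L) : a <= b -> neg b <= neg a.
  by move=> /meet_idPl ab; rewrite -ab negL.2 leUr.
by apply/idP/idP => [/anti | /anti //]; rewrite !negL.1.
Qed.

Lemma le_dmnl (x y : L) : (neg x <= y) = (neg y <= x).
Proof. by rewrite -{1}(negL.1 y) le_dmn2. Qed.

Lemma le_dmnr (x y : L) : (x <= neg y) = (y <= neg x).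
Proof. by rewrite -{1}(negL.1 x) le_dmn2. Qed.
End DeMorganNegation.

Lemma lattice_morphism_homo {d1 d2 : Order.disp_t}
    (L1 : tbDistrLatticeType d1) (L2 : tbDistrLatticeType d2) (h : L1 -> L2) :
  lattice_morphism h -> {homo h : x y / x <= y}.
Proof. by case=> hI _ _ _ x y /meet_idPl xy; rewrite -xy hI leIr. Qed.

Section LatticeIsomorphism.
Context {d1 d2 : Order.disp_t} (L1 : tbDistrLatticeType d1) (L2 : tbDistrLatticeType d2).
Variables (f : L1 -> L2) (g : L2 -> L1).
Hypothesis iso : HBL f g.

Lemma HBL_sym : HBL g f.
Proof. by case: iso. Qed.

Lemma HBL_adj (x : L1) (y : L2) : (f x <= y) = (x <= g y).
Proof.
have [fM gM fK gK] := iso.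
apply/idP/idP => [/(lattice_morphism_homo gM) | /(lattice_morphism_homo fM)].
  by rewrite fK.
by rewrite gK.
Qed.

Lemma HBL_mono : {mono f : x y / x <= y}.
Proof. by have [_ _ fK _] := iso; move=> x y; rewrite HBL_adj fK. Qed.
End LatticeIsomorphism.

Lemma foldr_and_In {T : Type} (P : T -> Prop) (s : seq T) :
  (forall x, List.In x s -> P x) -> foldr (fun x Q => P x /\ Q) True s.
Proof.
elim: s => //= x s IHs Ps; split; first by apply: Ps; left.
by apply: IHs => y sy; apply: Ps; right.
Qed.

Section Soundness.
Context {d1 d2 : Order.disp_t} (L1 : tbDistrLatticeType d1) (L2 : tbDistrLatticeType d2).
Variables (n : L1 -> L2) (p : L2 -> L1) (neg1 : L1 -> L1) (neg2 : L2 -> L2)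
          (v1 : nat -> L1) (v2 : nat -> L2).
Hypothesis iso : HBL n p.
Hypotheses (compl1 : complete_lattice L1) (distr1 : completely_distributive L1).
Hypotheses (compl2 : complete_lattice L2) (distr2 : completely_distributive L2).

Local Notation carrier i := (@car _ _ L1 L2 i).

Definition conflation_laws : Prop :=
  [/\ de_morgan_neg neg1, de_morgan_neg neg2 & forall a, n (neg1 a) = neg2 (n a)].

Lemma cle_rres i (x y z : carrier i) : cle (cmeet x y) z <-> cle x (crres y z).
Proof. by case: i x y z => x y z /=; rewrite le_rres. Qed.

Lemma cle_lres i (x y z : carrier i) : cle x (cjoin y z) <-> cle (clres x y) z.
Proof. by case: i x y z => x y z /=; rewrite lres_le. Qed.

Section Conflation.
Hypotheses (neg1L : de_morgan_neg neg1) (neg2L : de_morgan_neg neg2).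

Lemma cle_neg2 i (x y : carrier i) : cle (cneg neg1 neg2 x) (cneg neg1 neg2 y) <-> cle y x.
Proof. by case: i x y => x y /=; rewrite le_dmn2. Qed.

Lemma cle_negl i (x y : carrier i) : cle (cneg neg1 neg2 x) y <-> cle (cneg neg1 neg2 y) x.
Proof. by case: i x y => x y /=; rewrite le_dmnl. Qed.

Lemma cle_negr i (x y : carrier i) : cle x (cneg neg1 neg2 y) <-> cle y (cneg neg1 neg2 x).
Proof. by case: i x y => x y /=; rewrite le_dmnr. Qed.
End Conflation.

Lemma rule_sound c (ps : seq (sequent c)) (s : sequent c) :
  (c -> conflation_laws) -> rule ps s ->
  (forall q, List.In q ps -> holds n p neg1 neg2 v1 v2 q) ->
  holds n p neg1 neg2 v1 v2 s.
Proof.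
have [n_adj p_adj] := (HBL_adj iso, HBL_adj (HBL_sym iso)).
have [n_mono p_mono] := (HBL_mono iso, HBL_mono (HBL_sym iso)).
have [_ [_ _ p0 p1] _ _] := iso.
move=> conf R /foldr_and_In; case: R => /=.
- by move=> i X Y Z [/cle_rres].
- by move=> i X Y Z [/cle_rres].
- by move=> i X Y Z [/cle_lres].
- by move=> i X Y Z [/cle_lres].
- by move=> X Y [+ _]; rewrite p_adj.
- by move=> X Y [+ _]; rewrite p_adj.
- by move=> X Y [+ _]; rewrite n_adj.
- by move=> X Y [+ _]; rewrite n_adj.
- by move=> [] k _ /=.
- by move=> [] X Y A [h1 [h2 _]]; apply: le_trans h2.
- by move=> [] X Y [+ _]; rewrite /= meetx1.
- by move=> [] X Y [+ _]; rewrite /= joinx0.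
- by move=> [] X Y Z [+ _]; rewrite /= meetC.
- by move=> [] X Y Z [+ _]; rewrite /= joinC.
- by move=> [] X Y Z W [+ _]; rewrite /= meetA.
- by move=> [] X Y Z W [+ _]; rewrite /= joinA.
- by move=> [] X Y Z [/= /leIxl].
- by move=> [] X Y Z [/= /lexUl].
- by move=> [] X Z [+ _]; rewrite /= meetxx.
- by move=> [] X Y [+ _]; rewrite /= joinxx.
- by move=> i X [].
- by move=> [] _ /=.
- by move=> [] _ /=.
- by move=> i X [].
- by move=> i A B X [].
- by move=> [] X Y A B [h1 [h2 _]]; apply: leI2.
- by move=> [] A B X Y [h1 [h2 _]]; apply: leU2.
- by move=> i X A B [].
- by move=> X Y [+ _]; rewrite n_mono.
- by move=> X Y [+ _]; rewrite n_mono.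
- by move=> X Y [+ _]; rewrite p_mono.
- by move=> X Y [+ _]; rewrite p_mono.
- by move=> X [+ _]; rewrite p0.
- by move=> X [+ _]; rewrite p1.
- by move=> A X [].
- by move=> A X [].
- by move=> A X [].
- by move=> A X [].
- by move=> H; have [N1 N2 _] := conf H; move=> i X Y [/(cle_negl N1 N2)].
- by move=> H; have [N1 N2 _] := conf H; move=> i X Y [/(cle_negr N1 N2)].
- by move=> H; have [N1 N2 _] := conf H; move=> i X Y [/(cle_neg2 N1 N2)].
- by move=> H; have [N1 N2 _] := conf H; move=> i X Y [/(cle_neg2 N1 N2)].
- by move=> H; have [_ _ nN] := conf H; move=> X Y [+ _]; rewrite nN.
- by move=> H; have [_ _ nN] := conf H; move=> X Y [+ _]; rewrite nN.
- by move=> H i A Y [].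
- by move=> H i X A [].
Qed.

Lemma derivable_sound c (s : sequent c) :
  (c -> conflation_laws) -> derivable s -> holds n p neg1 neg2 v1 v2 s.
Proof. by move=> conf; elim=> ps s' R _; apply: rule_sound. Qed.

End Soundness.

Theorem mainTheorem1 :
  (forall (d1 d2 : Order.disp_t) (L1 : tbDistrLatticeType d1) (L2 : tbDistrLatticeType d2)
          (n : L1 -> L2) (p : L2 -> L1),
     perfect_HBL n p ->
     forall (v1 : nat -> L1) (v2 : nat -> L2),
       (forall (ps : seq (sequent false)) (s : sequent false),
          rule ps s ->
          (forall q, List.In q ps -> holds_BL n p v1 v2 q) ->
          holds_BL n p v1 v2 s) /\
       (forall s : sequent false, derivable s -> holds_BL n p v1 v2 s)) /\
  (forall (d1 d2 : Order.disp_t) (L1 : tbDistrLatticeType d1) (L2 : tbDistrLatticeType d2)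
          (n : L1 -> L2) (p : L2 -> L1) (neg1 : L1 -> L1) (neg2 : L2 -> L2),
     perfect_HCBL n p neg1 neg2 ->
     forall (v1 : nat -> L1) (v2 : nat -> L2),
       (forall (ps : seq (sequent true)) (s : sequent true),
          rule ps s ->
          (forall q, List.In q ps -> holds n p neg1 neg2 v1 v2 q) ->
          holds n p neg1 neg2 v1 v2 s) /\
       (forall s : sequent true, derivable s -> holds n p neg1 neg2 v1 v2 s)).
Proof.
split=> [d1 d2 L1 L2 n p [iso [C1 D1 _ _] [C2 D2 _ _] _] v1 v2 |
         d1 d2 L1 L2 n p neg1 neg2 [[iso N1 N2 nN _] [C1 D1 _ _] [C2 D2 _ _] _] v1 v2].
- have no_conflation : false -> conflation_laws n (@id L1) (@id L2) by [].
  split=> [ps s | s]; first exact: rule_sound.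
  exact: derivable_sound.
- have conf : true -> conflation_laws n neg1 neg2 by split.
  split=> [ps s | s]; first exact: rule_sound.
  exact: derivable_sound.
Qed.
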